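(* For $n\ge1$ and $r\ge0$, the number of simple two-dimensional lattice paths of length $n$ with compactification degree $r$ is \[ 4^{r+1}\sum_{\lambda\ge0}\lambda(-1)^{\lambda-1}\bigg[\binom{2n-1}{n-\lambda2^r}-\binom{2n-1}{n-\lambda2^r-1}\bigg], \] where binomial coefficients with negative lower index are $0$.
   Context: A simple two-dimensional lattice path is a finite nonempty word over the steps $\{\uparrow,\rightarrow,\downarrow,\leftarrow\}$; its length is the number of steps. The reduction $\Phi_L(\ell)$ of a path $\ell$ of length $\ge2$ is defined as follows. First, if the first step of $\ell$ is vertical, the entire path is rotated by $90^\circ$ clockwise; then, if the last step of the resulting path is horizontal, this last step alone is rotated by $90^\circ$ clockwise. The resulting path starts with a horizontal and ends with a vertical step, so it decomposes uniquely as $H_1V_1H_2V_2\cdots H_kV_k$ ($k\ge1$), where each $H_i$ is a nonempty maximal run of horizontal steps and each $V_i$ a nonempty maximal run of vertical steps. Each block $H_iV_i$ is replaced by one diagonal step: $\nearrow$ if $H_i$ starts with $\rightarrow$ and $V_i$ starts with $\uparrow$; $\searrow$ if $H_i$ starts with $\rightarrow$ and $V_i$ with $\downarrow$; $\swarrow$ if $H_i$ starts with $\leftarrow$ and $V_i$ with $\downarrow$; $\nwarrow$ if $H_i$ starts with $\leftarrow$ and $V_i$ with $\uparrow$. Finally this diagonal path is rotated by $45^\circ$ clockwise, giving a simple lattice path $\Phi_L(\ell)$ of length $k$. The compactification degree $\mathrm{cdeg}(\ell)$ of a path $\ell$ of length $\ge1$ is the number $m\ge0$ such that $\Phi_L^m(\ell)$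 consists of a single step. *)

From HB Require Import structures.
From mathcomp Require Import all_boot all_order all_algebra.
Set Implicit Arguments. Unset Strict Implicit. Unset Printing Implicit Defensive.
Import GRing.Theory Num.Theory.

Inductive dir := U | R | D | L.

Definition dir_enc (d : dir) : 'I_4 :=
  match d with U => inord 0 | R => inord 1 | D => inord 2 | L => inord 3 end.
Definition dir_dec (i : 'I_4) : dir :=
  match val i with 0 => U | 1 => R | 2 => D | _ => L end.
Lemma dir_encK : cancel dir_enc dir_dec.
Proof. by case; rewrite /dir_dec /= inordK. Qed.
HB.instance Definition _ := Finite.copy dir (can_type dir_encK).

(* A simple lattice path is a word over dir (nonemptiness imposed where used). *)
Definition lpath := seq dir.

Definition horizontal (d : dir) : bool := match d with R | L => true | _ => false end.
Definition vertical (d : dir) : bool := ~~ horizontal d.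

Definition rot (d : dir) : dir := match d with U => R | R => D | D => L | L => U end.

(* first letters of the maximal runs of equally oriented steps *)
Fixpoint heads (prev : dir) (s : lpath) : lpath :=
  match s with
  | [::] => [::]
  | x :: s' => if horizontal x == horizontal prev then heads x s' else x :: heads x s'
  end.
Definition runheads (s : lpath) : lpath :=
  match s with [::] => [::] | x :: s' => x :: heads x s' end.

(* block H_i V_i with given first letters -> diagonal step, then rotated by
   45 degrees clockwise:  NE -> R, SE -> D, SW -> L, NW -> U *)
Definition diag_rot (h v : dir) : dir :=
  match h, v with
  | R, U => R | R, D => D | L, D => L | L, U => U
  | _, _ => R (* never used: h horizontal, v vertical *)
  end.

Fixpoint pairup (s : lpath) : lpath :=
  match s with h :: v :: t => diag_rot h v :: pairup t | _ => [::] end.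

(* the reduction Phi_L (meaningful for paths of length >= 2) *)
Definition PhiL (s : lpath) : lpath :=
  let s1 := if vertical (head U s) then map rot s else s in
  let s2 := if horizontal (last U s1) then rcons (belast (head U s1) (behead s1)) (rot (last U s1))
            else s1 in
  pairup (runheads s2).

Definition has_cdeg (l : lpath) (m : nat) : bool :=
  (size (iter m PhiL l) == 1) && [forall k : 'I_m, size (iter k PhiL l) != 1].

Definition binomz (m : nat) (k : int) : int :=
  match k with Posz k' => ('C(m, k'))%:Z | Negz _ => 0 end.

(* Let f(n, m) = 2^(n-m) C(n-1, m-1) be the number of paths of length n whose
   maximal runs start with m prescribed steps of alternating orientation. Up to the
   normalisation of its first and last step, the reduction of a path only depends
   on these run heads, so every path of length k has exactly 4 f(n, 2k) preimages
   of length n. Writing N(n, r) for the number of paths of length n and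
   compactification degree r, this gives N(n, r+1) = sum_k 4 f(n, 2k) N(k, r)
   and N(n, 0) = 4 [n = 1].
   The closed form obeys the same recursion thanks to the transform identity
   sum_k f(n, 2k) b(k, j) = b(n, 2j) for the ballot numbers
   b(n, j) = C(2n-1, n-j) - C(2n-1, n-j-1); it follows by induction on n, together
   with its odd counterpart, from f(n+1, m+1) = 2 f(n, m+1) + f(n, m) and
   b(n+1, j+1) = b(n, j) + 2 b(n, j+1) + b(n, j+2). *)

From Pilot Require Import Defs.
From HB Require Import structures.
From mathcomp Require Import all_boot all_order all_algebra.
From mathcomp Require Import zify ring.
Import GRing.Theory Num.Theory.
Local Open Scope ring_scope.

Lemma binomz_neg m k : k < 0 -> binomz m k = 0.
Proof. by case: k. Qed.

Lemma binomzS m k : binomz m.+1 k = binomz m k + binomz m (k - 1).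
Proof.
case: k => [[|k]|k] /=.
- by rewrite !bin0 addr0.
- by rewrite subn1 /= binS PoszD addrC.
- by rewrite addr0.
Qed.

(* [ballot n j] is the bracket of the formula; [ballot 0 j = (j == 0)] because
   [2 * 0 - 1] truncates to [0]. *)
Definition ballot (n j : nat) : int :=
  binomz (2 * n - 1) (n%:Z - j%:Z) - binomz (2 * n - 1) (n%:Z - j%:Z - 1).

Lemma ballot0n j : ballot 0 j = (j == 0%N)%:Z.
Proof. by case: j. Qed.

Lemma ballot_eq0 n j : (n < j)%N -> ballot n j = 0.
Proof. by move=> ltnj; rewrite /ballot !binomz_neg ?subr0 //; lia. Qed.

Lemma ballotn0 n : ballot n 0 = (n == 0%N)%:Z.
Proof.
case: n => [//|n]; rewrite /ballot.
have -> : (2 * n.+1 - 1 = n.*2.+1)%N by lia.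
have -> : Posz n.+1 - Posz 0 = Posz n.+1 by lia.
have -> : Posz n.+1 - 1 = Posz n by lia.
rewrite /= -(@bin_sub n.*2.+1 n.+1); last by lia.
have -> : (n.*2.+1 - n.+1 = n)%N by lia.
by rewrite subrr.
Qed.

Lemma ballotSS n j : ballot n.+1 j.+1 = ballot n j + 2 * ballot n j.+1 + ballot n j.+2.
Proof.
case: n => [|n]; first by rewrite !ballot0n /ballot; case: j.
rewrite /ballot.
have -> : (2 * n.+2 - 1 = (2 * n.+1 - 1).+2)%N by lia.
set x := Posz n.+1 - Posz j.
have -> : Posz n.+2 - Posz j.+1 = x by rewrite /x; lia.
have -> : Posz n.+1 - Posz j.+1 = x - 1 by rewrite /x; lia.
have -> : Posz n.+1 - Posz j.+2 = x - 1 - 1 by rewrite /x; lia.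
by rewrite !binomzS; ring.
Qed.

(* Number of paths of length [N] whose first steps of maximal runs form a given
   orientation-alternating word of length [m]: [C(N-1, m-1)] ways to cut into
   runs, two directions for each step that is not the first of its run. *)
Definition runs_fiber (N m : nat) : nat :=
  match N, m with
  | 0, 0 => 1 | 0, _.+1 | _.+1, 0 => 0
  | N.+1, m.+1 => 2 ^ (N - m) * 'C(N, m)
  end.

Lemma runs_fiberSS N m :
  runs_fiber N.+1 m.+1 = (2 * runs_fiber N m.+1 + runs_fiber N m)%N.
Proof.
case: N => [|N]; first by case: m.
case: m => [|m] /=; first by rewrite !subn0 !bin0 !muln1 addn0 expnS.
rewrite subSS binS.
have [ltmN | leNm] := ltnP m N; last by rewrite (@bin_small N m.+1) //; ring.
have -> : (N - m = (N - m.+1).+1)%N by lia.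
by rewrite expnS; ring.
Qed.

Lemma runs_fiberS0 N : runs_fiber N.+1 0 = 0%N.
Proof. by []. Qed.

Lemma alt_telescope (c : nat -> int) N :
  \sum_(i < N) (-1) ^+ i * (c i + c i.+1) = c 0%N - (-1) ^+ N * c N.
Proof.
elim: N => [|N IH]; first by rewrite big_ord0 expr0 mul1r subrr.
by rewrite big_ord_recr /= IH exprS; ring.
Qed.

Definition alt_ballot (n j : nat) : int :=
  \sum_(i < n.+1) (-1) ^+ i * ballot n (2 * j + 2 * i).+1.

Lemma alt_ballotS n j : alt_ballot n.+1 j = 2 * alt_ballot n j + ballot n (2 * j).
Proof.
rewrite /alt_ballot; under eq_bigr => i _ do rewrite ballotSS.
pose c i := ballot n (2 * j + 2 * i).
have split_term (i : 'I_n.+2) :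
    (-1) ^+ i * (c i + 2 * ballot n (2 * j + 2 * i).+1 + ballot n (2 * j + 2 * i).+2)
    = (-1) ^+ i * (c i + c i.+1) + 2 * ((-1) ^+ i * ballot n (2 * j + 2 * i).+1).
  by rewrite /c (_ : 2 * j + 2 * i.+1 = (2 * j + 2 * i).+2)%N; [ring | lia].
rewrite (eq_bigr _ (fun i _ => split_term i)) big_split /= alt_telescope -mulr_sumr.
rewrite big_ord_recr /= (@ballot_eq0 n (2 * j + 2 * n.+1).+1); last by lia.
rewrite /c (@ballot_eq0 n (2 * j + 2 * n.+2)); last by lia.
by rewrite muln0 addn0; ring.
Qed.

Lemma alt_ballot_addS n j : alt_ballot n j + alt_ballot n j.+1 = ballot n (2 * j).+1.
Proof.
rewrite /alt_ballot -big_split /=.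
pose c i := ballot n (2 * j + 2 * i).+1.
have merge_term (i : 'I_n.+1) :
    (-1) ^+ i * c i + (-1) ^+ i * ballot n (2 * j.+1 + 2 * i).+1
    = (-1) ^+ i * (c i + c i.+1).
  by rewrite /c (_ : 2 * j.+1 + 2 * i = 2 * j + 2 * i.+1)%N; [ring | lia].
rewrite (eq_bigr _ (fun i _ => merge_term i)) alt_telescope /c muln0 addn0.
by rewrite (@ballot_eq0 n (2 * j + 2 * n.+1).+1) ?mulr0 ?subr0 //; lia.
Qed.

Definition even_fiber_sum (M n j : nat) : int :=
  \sum_(k < M) (runs_fiber n (2 * k))%:Z * ballot k j.
Definition odd_fiber_sum (M n j : nat) : int :=
  \sum_(k < M) (runs_fiber n (2 * k).+1)%:Z * ballot k j.

Section FiberSumStep.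

Variable n : nat.
Hypothesis even_n : forall M j, (n < M)%N -> even_fiber_sum M n j = ballot n (2 * j).
Hypothesis odd_n : forall M j, (n < M)%N -> odd_fiber_sum M n j = alt_ballot n j.

Lemma odd_fiber_sum_step M j : (n < M)%N -> odd_fiber_sum M n.+1 j = alt_ballot n.+1 j.
Proof.
move=> ltnM; rewrite alt_ballotS -(even_n M j ltnM) -(odd_n M j ltnM) /odd_fiber_sum.
under eq_bigr => k _ do rewrite runs_fiberSS PoszD PoszM mulrDl -mulrA.
by rewrite big_split /= -mulr_sumr.
Qed.

Lemma even_fiber_sum_step M j : (n.+1 < M)%N ->
  even_fiber_sum M n.+1 j = ballot n.+1 (2 * j).
Proof.
case: j => [|j] ltnM.
  rewrite ballotn0 /even_fiber_sum big1 // => k _.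
  by rewrite ballotn0; case: (nat_of_ord k) => [|k'] //=; rewrite mulr0.
case: M ltnM => [//|M] ltnM.
rewrite /even_fiber_sum big_ord_recl /= mul0r add0r.
have expand (k : 'I_M) :
    (runs_fiber n.+1 (2 * bump 0 k))%:Z * ballot (bump 0 k) j.+1
    = 2 * ((runs_fiber n (2 * bump 0 k))%:Z * ballot (bump 0 k) j.+1)
      + ((runs_fiber n (2 * k).+1)%:Z * ballot k j
         + 2 * ((runs_fiber n (2 * k).+1)%:Z * ballot k j.+1)
         + (runs_fiber n (2 * k).+1)%:Z * ballot k j.+2).
  rewrite (_ : bump 0 k = k.+1) // (_ : 2 * k.+1 = (2 * k).+2)%N; last by lia.
  by rewrite runs_fiberSS ballotSS PoszD PoszM; ring.
rewrite (eq_bigr _ (fun k _ => expand k)) big_split /= -mulr_sumr.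
rewrite !big_split /= -mulr_sumr.
have := even_n M.+1 j.+1 (ltnW ltnM).
rewrite /even_fiber_sum big_ord_recl /= ballot0n mulr0 add0r => ->.
have ltnM' : (n < M)%N by lia.
have := odd_n M j ltnM'; have := odd_n M j.+1 ltnM'; have := odd_n M j.+2 ltnM'.
rewrite /odd_fiber_sum => -> -> ->.
have -> : alt_ballot n j + 2 * alt_ballot n j.+1 + alt_ballot n j.+2
        = (alt_ballot n j + alt_ballot n j.+1) + (alt_ballot n j.+1 + alt_ballot n j.+2).
  by ring.
rewrite !alt_ballot_addS (_ : 2 * j.+1 = (2 * j).+2)%N; last by lia.
by rewrite ballotSS; ring.
Qed.

End FiberSumStep.

(* The odd half is only needed to carry the induction. *)
Lemma fiber_sums n M j : (n < M)%N ->
  even_fiber_sum M n j = ballot n (2 * j) /\ odd_fiber_sum M n j = alt_ballot n j.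
Proof.
elim: n => [|n IH] in M j *.
  case: M => [//|M] _; rewrite /even_fiber_sum /odd_fiber_sum !big_ord_recl.
  rewrite /alt_ballot big_ord1 /= !mul1r !ballot0n.
  by rewrite !big1 ?addr0 => [|k _]; [case: j | rewrite mul0r].
move=> ltnM.
have even_n M' j' (h : (n < M')%N) := proj1 (IH M' j' h).
have odd_n M' j' (h : (n < M')%N) := proj2 (IH M' j' h).
split; first exact: (even_fiber_sum_step _ even_n odd_n).
by apply: (odd_fiber_sum_step _ even_n odd_n); lia.
Qed.

Definition cdeg_formula (r n : nat) : int :=
  \sum_(0 <= lam < n.+1) lam%:Z * (-1) ^+ lam.-1 * ballot n (lam * 2 ^ r).

Lemma weighted_alt_telescope (c : nat -> int) N :
  \sum_(i < N) i.+1%:Z * (-1) ^+ i * (c i + 2 * c i.+1 + c i.+2)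
  = c 0%N - (-1) ^+ N * (N%:Z * c N.+1 + N.+1%:Z * c N).
Proof.
elim: N => [|N IH]; first by rewrite big_ord0 expr0 mul1r mul0r add0r mul1r subrr.
by rewrite big_ord_recr /= IH exprS -?[N.+1]addn1 -?[N.+2]addn2 ?PoszD; ring.
Qed.

Lemma cdeg_formula0 n : cdeg_formula 0 n = (n == 1%N)%:Z.
Proof.
rewrite /cdeg_formula; case: n => [|n]; first by rewrite big_nat1 mul0r.
rewrite big_nat_recl // mul0r add0r big_mkord.
under eq_bigr => i _ do rewrite /= expn0 muln1 ballotSS.
rewrite weighted_alt_telescope (@ballot_eq0 n n.+2) // (@ballot_eq0 n n.+1) //.
by rewrite !mulr0 ?addr0 ?mulr0 ?subr0 ballotn0; case: n.
Qed.

Lemma cdeg_formula_widen r k n : (k <= n)%N ->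
  cdeg_formula r k =
  \sum_(0 <= lam < n.+1) lam%:Z * (-1) ^+ lam.-1 * ballot k (lam * 2 ^ r).
Proof.
move=> lekn; rewrite /cdeg_formula [RHS](@big_cat_nat _ _ _ k.+1 0 n.+1) //=.
rewrite [X in _ = _ + X]big_nat_cond [X in _ = _ + X]big1 ?addr0 //.
move=> lam /andP [/andP [ltklam _] _]; rewrite ballot_eq0 ?mulr0 //.
have : (0 < 2 ^ r)%N by rewrite expn_gt0.
by nia.
Qed.

Lemma cdeg_formulaS r n :
  cdeg_formula r.+1 n = \sum_(k < n.+1) (runs_fiber n (2 * k))%:Z * cdeg_formula r k.
Proof.
rewrite [RHS](eq_bigr (fun k : 'I_n.+1 => \sum_(0 <= lam < n.+1)
   ((runs_fiber n (2 * k))%:Z * (lam%:Z * (-1) ^+ lam.-1 * ballot k (lam * 2 ^ r))))); last first.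
  by move=> k _; rewrite (@cdeg_formula_widen r k n) ?mulr_sumr // -ltnS.
rewrite exchange_big /cdeg_formula /=; apply: eq_bigr => lam _.
under eq_bigr => k _ do rewrite mulrCA.
have [even_sum _] := @fiber_sums n n.+1 (lam * 2 ^ r) (ltnSn n).
rewrite -mulr_sumr; congr (_ * _).
rewrite /even_fiber_sum in even_sum; rewrite even_sum expnS; congr ballot; ring.
Qed.

Definition dirs : seq dir := [:: U; R; D; L].

Fixpoint lpaths (n : nat) : seq lpath :=
  if n is n'.+1 then [seq x :: w | x <- dirs, w <- lpaths n'] else [:: [::]].

Arguments lpaths : simpl never.

Lemma eq_dirE a b :
  (a == b) = match a, b with U, U | R, R | D, D | L, L => true | _, _ => false end.
Proof. by apply/eqP/idP; [move=> ->; case: b | case: a; case: b]. Qed.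

Lemma mem_dirs x : x \in dirs.
Proof. by case: x; rewrite /dirs !in_cons eqxx ?orbT. Qed.

Lemma uniq_dirs : uniq dirs.
Proof. by rewrite /= !in_cons !eq_dirE. Qed.

Lemma mem_lpaths n w : (w \in lpaths n) = (size w == n).
Proof.
elim: n w => [|n IH] w; first by rewrite /lpaths /= in_cons in_nil orbF; case: w.
rewrite /lpaths -/lpaths; apply/allpairsPdep/idP => [[a [b [_ hb ->]]]|].
  by rewrite /= eqSS -IH.
by case: w => [//|x w] hw; exists x, w; rewrite mem_dirs IH.
Qed.

Lemma uniq_lpaths n : uniq (lpaths n).
Proof.
elim: n => [//|n IH]; rewrite /lpaths -/lpaths.
by apply: allpairs_uniq => //; [exact: uniq_dirs | move=> [a b] [c d] _ _ /= [-> ->]].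
Qed.

Lemma count_lpathsS (P : pred lpath) n : count P (lpaths n.+1) =
  (count (fun w => P (U :: w)) (lpaths n) + count (fun w => P (R :: w)) (lpaths n)
  + count (fun w => P (D :: w)) (lpaths n) + count (fun w => P (L :: w)) (lpaths n))%N.
Proof. by rewrite /lpaths -/lpaths /= !count_cat !count_map /= addn0 !addnA. Qed.

Lemma card_tuple_lpaths (P : pred lpath) n :
  #|[set t : n.-tuple dir | P t]| = count P (lpaths n).
Proof.
rewrite cardsE cardE /enum_mem size_filter -enumT.
transitivity (count P (map val (enum {: n.-tuple dir}))).
  by rewrite [in RHS]count_map enumT; apply: eq_in_count => t _.
apply/permP/uniq_perm; first by rewrite map_inj_uniq ?enum_uniq //; exact: val_inj.
  exact: uniq_lpaths.
move=> w; rewrite mem_lpaths; apply/mapP/idP => [[t _ ->]|hw]; first by rewrite size_tuple.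
by exists (Tuple hw); rewrite ?mem_enum.
Qed.

Definition fix_last (y : lpath) : lpath :=
  if horizontal (last U y) then rcons (belast (head U y) (behead y)) (Defs.rot (last U y))
  else y.

Lemma PhiL_cons x y : y != [::] -> PhiL (x :: y) =
  if horizontal x then pairup (x :: heads x (fix_last y))
  else pairup (Defs.rot x :: heads (Defs.rot x) (fix_last (map Defs.rot y))).
Proof. by case: y => [//|a t] _; rewrite /PhiL /fix_last /=; case: x; case: (horizontal _). Qed.

Lemma fix_last_cons a t : t != [::] -> fix_last (a :: t) = a :: fix_last t.
Proof. by case: t => [//|b t] _; rewrite /fix_last /=; case: (horizontal _). Qed.

Lemma fix_last_vertical x y : y != [::] -> vertical (last x (fix_last y)).
Proof.
case: y => [//|a t] _; rewrite /fix_last /=.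
case: ifP => [|hor]; last by rewrite /vertical hor.
by rewrite last_rcons; case: (last a t).
Qed.

(* [alternating o h]: the orientations of the word [o :: h] alternate and the
   last one is vertical ([o = true] means horizontal). *)
Fixpoint alternating (o : bool) (h : lpath) : bool :=
  if h is b :: h' then (o != horizontal b) && alternating (horizontal b) h' else ~~ o.

Lemma alternating_heads p z : alternating (horizontal p) (heads p z) = vertical (last p z).
Proof.
elim: z p => [//|a z IH] p /=.
case: ifP => [/eqP <-|]; rewrite /= IH //.
by case: (horizontal a); case: (horizontal p).
Qed.

Arguments runs_fiber : simpl never.

Lemma count_heads_cons p a h (W : seq lpath) (F : lpath -> lpath) :
  count (fun w => heads p (a :: F w) == h) W =
  if horizontal a == horizontal p then count (fun w => heads a (F w) == h) W
  else if h is b :: h' then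
    (if a == b then count (fun w => heads a (F w) == h') W else 0%N)
  else 0%N.
Proof.
rewrite /=; case: ifP => // _.
case: h => [|b h']; first exact: count_pred0.
case: ifP => ab; first by apply: eq_count => w; rewrite eqseq_cons ab.
by rewrite -(count_pred0 W); apply: eq_count => w; rewrite eqseq_cons ab.
Qed.

(* The factor 2: [fix_last] is two-to-one onto the paths ending vertically. *)
Lemma count_fix_last_heads n p h :
  count (fun y => heads p (fix_last y) == h) (lpaths n.+1) =
  if alternating (horizontal p) h then (2 * runs_fiber n.+2 (size h).+1)%N else 0%N.
Proof.
elim: n p h => [|n IH] p h.
  case: p; case: h => [|b [|c h']]; try case: b;
  rewrite /lpaths /runs_fiber /= ?eqseq_cons ?eq_dirE ?andbF //=;
  by rewrite bin_small // !muln0; case: ifP.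
rewrite count_lpathsS.
have fix_lastE a : count (fun w => heads p (fix_last (a :: w)) == h) (lpaths n.+1)
    = count (fun w => heads p (a :: fix_last w) == h) (lpaths n.+1).
  apply: eq_in_count => w; rewrite mem_lpaths => /eqP hw.
  by rewrite fix_last_cons // -size_eq0 hw.
rewrite !fix_lastE !count_heads_cons {fix_lastE}.
case: p; case: h => [|b h']; try case: b; rewrite /= ?eq_dirE /= ?IH /=;
  rewrite ?(runs_fiberSS n.+2) ?runs_fiberS0; first [lia | case: ifP => _; lia].
Qed.

Definition hor_head (c : dir) : dir := match c with R | D => R | _ => L end.
Definition vert_head (c : dir) : dir := match c with R | U => U | _ => D end.

Fixpoint unpair (w : lpath) : lpath :=
  if w is c :: w' then hor_head c :: vert_head c :: unpair w' else [::].

Lemma size_unpair w : size (unpair w) = (2 * size w)%N.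
Proof. by elim: w => [//|c w IH] /=; rewrite IH; lia. Qed.

Lemma alternating_unpair c w : alternating true (vert_head c :: unpair w).
Proof.
have alt_false w' : alternating false (unpair w') by elim: w' => [//|[]].
by case: c; rewrite /= alt_false.
Qed.

Lemma diag_rot_eq x v c : horizontal x -> vertical v ->
  (diag_rot x v == c) = (x == hor_head c) && (v == vert_head c).
Proof. by case: x; case: v; case: c; rewrite /= ?eq_dirE. Qed.

Lemma pairup_eq_unpair w x h : horizontal x -> alternating true h ->
  (pairup (x :: h) == w) = (x :: h == unpair w).
Proof.
elim: w x h => [|c w IH] x [|v h] hx //= /andP [hv alt_h]; rewrite !eqseq_cons.
have vv : ~~ horizontal v by move: hv; case: (horizontal v).
rewrite (negbTE vv) in alt_h.
case: h alt_h => [|y h] /= alt_h.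
  rewrite diag_rot_eq // andbA; congr (_ && _).
  by case: w {IH} => [|c' w'] /=; rewrite ?andbF ?andbT.
case/andP: alt_h => hy alt_h.
have hy' : horizontal y by move: hy; case: (horizontal y).
by rewrite hy' in alt_h; rewrite diag_rot_eq // -andbA IH.
Qed.

Lemma rotK4 d : Defs.rot (Defs.rot (Defs.rot (Defs.rot d))) = d.
Proof. by case: d. Qed.

Lemma count_map_rot (P : pred lpath) m :
  count (fun w => P (map Defs.rot w)) (lpaths m) = count P (lpaths m).
Proof.
rewrite -count_map; apply/permP/uniq_perm; last 1 first.
- move=> w; rewrite mem_lpaths; apply/mapP/idP => [[y hy ->]|hw].
    by rewrite size_map -mem_lpaths.
  exists (map (Defs.rot \o Defs.rot \o Defs.rot) w); first by rewrite mem_lpaths size_map.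
  by rewrite -map_comp; elim: w {hw} => [//|a w IH] /=; rewrite rotK4 -IH.
- rewrite map_inj_uniq ?uniq_lpaths //; apply: inj_map => a b.
  by move=> /(congr1 (iter 3 Defs.rot)); rewrite /= !rotK4.
exact: uniq_lpaths.
Qed.

(* Up to rotating the whole path, a vertical first step [a] behaves like the
   horizontal step [rot a], so two of the four first steps lead to the first run
   head [hor_head c], each contributing [2 * runs_fiber _ _]. *)
Lemma count_PhiL_fiber n c w :
  count (fun s => PhiL s == c :: w) (lpaths n.+2) = (4 * runs_fiber n.+2 (2 * (size w).+1))%N.
Proof.
pose cx x := count (fun y => pairup (x :: heads x (fix_last y)) == c :: w) (lpaths n.+1).
have first_step a : count (fun y => PhiL (a :: y) == c :: w) (lpaths n.+1) =
    if horizontal a then cx a else cx (Defs.rot a).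
  case: ifP => ha; rewrite /cx; last rewrite -(count_map_rot _ n.+1);
    apply: eq_in_count => y; rewrite mem_lpaths => /eqP hy;
    by rewrite PhiL_cons ?ha // -size_eq0 hy.
have cxE x : horizontal x -> cx x =
    count (fun y => (x == hor_head c) && (heads x (fix_last y) == vert_head c :: unpair w))
      (lpaths n.+1).
  move=> hx; apply: eq_in_count => y; rewrite mem_lpaths => /eqP hy.
  rewrite pairup_eq_unpair //=.
  have := alternating_heads x (fix_last y); rewrite hx => ->.
  by apply: fix_last_vertical; rewrite -size_eq0 hy.
rewrite count_lpathsS !first_step /= !cxE // {first_step cxE cx}.
have alt := alternating_unpair c w.
have -> : (2 * (size w).+1 = (2 * size w).+2)%N by lia.
case: c alt => /= alt; rewrite ?eq_dirE /= ?count_pred0 !count_fix_last_heads /= alt size_unpair;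
  set t := runs_fiber _ _; lia.
Qed.

Lemma size_heads p s : (size (heads p s) <= size s)%N.
Proof.
elim: s p => [//|a s IH] p /=.
by case: ifP => _ /=; [exact: leq_trans (IH a) (leqnSn _) | rewrite ltnS].
Qed.

Lemma size_pairup s : (size (pairup s) <= size s)%N.
Proof.
have [m] := ubnP (size s); elim: m s => // m IH [|h [|v t]] //= ltsm.
by rewrite ltnS (leq_trans (IH t _)) //; lia.
Qed.

Lemma size_PhiL s : (size (PhiL s) <= size s)%N.
Proof.
rewrite /PhiL.
set s1 := if vertical (head U s) then map Defs.rot s else s.
have -> : size s = size s1 by rewrite /s1; case: ifP; rewrite ?size_map.
set s2 := if horizontal (last U s1) then _ else s1.
have -> : size s1 = size s2.
  by rewrite /s2; case: (s1) => [//|a t] /=; case: ifP => // _; rewrite size_rcons size_belast.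
apply: leq_trans (size_pairup _) _.
by case: (s2) => [//|a t] /=; rewrite ltnS size_heads.
Qed.

Lemma has_cdegE l m :
  has_cdeg l m =
  (size (iter m PhiL l) == 1%N) && all (fun k => size (iter k PhiL l) != 1%N) (iota 0 m).
Proof.
rewrite /has_cdeg; congr (_ && _); apply/forallP/allP => [H k | H k].
  by rewrite mem_iota add0n => /andP [_ ltkm]; exact: (H (Ordinal ltkm)).
by apply: H; rewrite mem_iota add0n ltn_ord.
Qed.

Lemma has_cdeg0 l : has_cdeg l 0 = (size l == 1%N).
Proof. by rewrite has_cdegE andbT. Qed.

Lemma has_cdegS l r : (2 <= size l)%N -> has_cdeg l r.+1 = has_cdeg (PhiL l) r.
Proof.
move=> size_l; rewrite !has_cdegE iterSr /= -[1%N]addn0 (iotaDl 1 0 r) all_map.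
rewrite (_ : size l != 1%N) ?neq_ltn ?size_l ?orbT //; congr (_ && _).
by apply: eq_all => k /=; rewrite add0n -iterS iterSr.
Qed.

Lemma has_cdegS_single l r : size l = 1%N -> has_cdeg l r.+1 = false.
Proof. by move=> size_l; rewrite has_cdegE /= size_l andbF. Qed.

Lemma has_cdeg_nil r : has_cdeg [::] r = false.
Proof.
rewrite /has_cdeg (_ : iter r PhiL [::] = [::]) //.
by elim: r => [//|r IH]; rewrite iterS IH.
Qed.

Lemma count_comp_fibers (T U : eqType) (f : T -> U) (P : pred U) (V : seq U) (L : seq T) :
  uniq V -> {in L, forall x, f x \in V} ->
  count (fun x => P (f x)) L = (\sum_(v <- V) P v * count (fun x => f x == v) L)%N.
Proof.
move=> uniq_V; elim: L => [|x L IH] fLV /=; first by rewrite big1 // => v _; rewrite muln0.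
rewrite IH => [|y yL]; last by apply: fLV; rewrite in_cons yL orbT.
under [RHS]eq_bigr => v _ do rewrite mulnDr.
rewrite big_split /= [X in _ = (X + _)%N](bigD1_seq (f x)) ?fLV ?mem_head //= eqxx muln1.
rewrite [X in _ = (_ + X + _)%N]big1 ?addn0 // => v.
by rewrite eq_sym => /negbTE ->; rewrite muln0.
Qed.

Definition lpaths_upto (N : nat) : seq lpath := flatten [seq lpaths k | k <- iota 0 N.+1].

Lemma mem_lpaths_upto N w : (w \in lpaths_upto N) = (size w <= N)%N.
Proof.
apply/flattenP/idP => [[s /mapP [k k_in ->]] | size_w].
  by rewrite mem_lpaths => /eqP size_w; move: k_in; rewrite mem_iota; lia.
by exists (lpaths (size w)); rewrite ?mem_lpaths //; apply: map_f; rewrite mem_iota; lia.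
Qed.

Lemma uniq_lpaths_upto N : uniq (lpaths_upto N).
Proof.
rewrite /lpaths_upto; elim: N.+1 0%N => [//|M IH] m /=.
rewrite cat_uniq uniq_lpaths IH andbT; apply/hasPn => w /flattenP [s /mapP [k k_in ->]].
by rewrite !mem_lpaths mem_iota in k_in * => /eqP ->; apply/negP => /eqP size_w; lia.
Qed.

Definition cdeg_count (n r : nat) : nat := count (has_cdeg^~ r) (lpaths n).

Lemma cdeg_countS n r : cdeg_count n.+2 r.+1 =
  (\sum_(k < n.+3) 4 * runs_fiber n.+2 (2 * k) * cdeg_count k r)%N.
Proof.
rewrite /cdeg_count (@eq_in_count _ _ (fun s => has_cdeg (PhiL s) r)); last first.
  by move=> s; rewrite mem_lpaths => /eqP size_s; rewrite has_cdegS // size_s.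
have PhiL_upto : {in lpaths n.+2, forall s, PhiL s \in lpaths_upto n.+2}.
  by move=> s; rewrite mem_lpaths mem_lpaths_upto => /eqP <-; exact: size_PhiL.
rewrite (@count_comp_fibers _ _ PhiL (has_cdeg^~ r) _ _ (uniq_lpaths_upto n.+2) PhiL_upto).
rewrite /lpaths_upto big_flatten big_map -[iota 0 n.+3]/(index_iota 0 n.+3) big_mkord.
apply: eq_bigr => k _.
rewrite -sumn_count sumnE big_map big_distrr /= !big_seq; apply: eq_bigr => w.
rewrite mem_lpaths => /eqP size_w; case: w size_w => [|c w] size_w.
  by rewrite has_cdeg_nil mul0n muln0.
by rewrite count_PhiL_fiber -size_w mulnC.
Qed.

Lemma cdeg_count_formula r n : (cdeg_count n r)%:Z = 4 ^+ r.+1 * cdeg_formula r n.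
Proof.
elim: r n => [|r IH] n.
  rewrite cdeg_formula0 /cdeg_count (@eq_in_count _ _ (fun _ => n == 1%N)); last first.
    by move=> s; rewrite mem_lpaths => /eqP size_s; rewrite has_cdeg0 size_s.
  by case: eqP => [-> //|_]; rewrite count_pred0 mulr0.
case: n => [|[|n]].
- by rewrite /cdeg_count /lpaths /= has_cdeg_nil /cdeg_formula big_nat1 !mul0r mulr0.
- rewrite /cdeg_count (@eq_in_count _ _ pred0) ?count_pred0; last first.
    by move=> s; rewrite mem_lpaths => /eqP size_s; rewrite has_cdegS_single.
  rewrite /cdeg_formula big_nat_recr //= big_nat1 mul0r add0r ballot_eq0 ?mulr0 //.
  by rewrite mul1n -[1%N]/(2 ^ 0)%N ltn_exp2l.
rewrite cdeg_countS cdeg_formulaS (big_morph Posz PoszD (erefl 0%:Z)) mulr_sumr.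
by apply: eq_bigr => k _; rewrite !PoszM IH !exprS; ring.
Qed.

Theorem proposition5 (n r : nat) (hn : (1 <= n)%N) :
  (#|[set t : n.-tuple dir | has_cdeg (tval t) r]|)%:Z =
  4 ^+ r.+1 *
    \sum_(0 <= lam < n.+1)
       (lam%:Z * (-1) ^+ (lam.-1) *
        (binomz (2 * n - 1) (n%:Z - (lam * 2 ^ r)%N%:Z)
         - binomz (2 * n - 1) (n%:Z - (lam * 2 ^ r)%N%:Z - 1))).
Proof.
by rewrite (card_tuple_lpaths (has_cdeg^~ r)); exact: cdeg_count_formula.
Qed.
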